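(* Let $\Sigma$ be any $(\mathbf d,\mathbf z)$-cluster pattern in a semifield $\mathbb P$ with initial seed $(\mathbf x,\mathbf y,B)$ (here $\mathbf y\in\mathbb P^n$ and $\mathbf z$ have values in $\mathbb P$), with exchange matrices $B_t=(b^t_{ij})$ and $y$-variables $y^t_i$. Let $C^t=(c^t_{ij})$ and $F^t_j$ be the $C$-matrices and $F$-polynomials of the $(\mathbf d,\mathbf z)$-cluster pattern with principal coefficients having the same initial exchange matrix $B$ and the same $\mathbf d$. Then for all $t$ and $i$, $$y^t_i=\prod_{j=1}^ny_j^{c^t_{ji}}\prod_{j=1}^nF^t_j|_{\mathbb P}(\mathbf y,\mathbf z)^{b^t_{ji}}.$$ Moreover, the $Y$-functions satisfy $Y^t_i(\mathbf y,\mathbf z)=\prod_jy_j^{c^t_{ji}}\prod_jF^t_j(\mathbf y,\mathbf z)^{b^t_{ji}}$ as rational functions in the formal variables.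
   Context: All matrices integer and $[a]_+=\max(a,0)$. A semifield $\mathbb P$ is an abelian multiplicative group with a commutative associative $\oplus$ over which multiplication distributes; $\mathbb Z\mathbb P$ its group ring, $\mathbb Q\mathbb P$ its fraction field, $\mathcal F=\mathbb Q\mathbb P(w_1,\dots,w_n)$. A seed in $\mathbb P$ is $(\mathbf x,\mathbf y,B)$ with $B=(b_{ij})$ skew-symmetrizable $n\times n$, $\mathbf x\in\mathcal F^n$, $\mathbf y\in\mathbb P^n$. Mutation data: positive integers $\mathbf d$ and $z_{i,s}\in\mathbb P$ ($1\le s\le d_i-1$) with $z_{i,s}=z_{i,d_i-s}$, $z_{i,0}=z_{i,d_i}=1$. The $(\mathbf d,\mathbf z)$-mutation $\mu_k(\mathbf{x},\mathbf{y},B)=(\mathbf{x}',\mathbf{y}',B')$: $b'_{ij}=-b_{ij}$ if $i=k$ or $j=k$, else $b'_{ij}=b_{ij}+d_k([-b_{ik}]_+b_{kj}+b_{ik}[b_{kj}]_+)$; $y'_k=y_k^{-1}$, $y'_i=y_i(y_k^{[\varepsilon b_{ki}]_+})^{d_k}(\bigoplus_{s=0}^{d_k}z_{k,s}y_k^{\varepsilon s})^{-b_{ki}}$ ($i\ne k$); $x'_i=x_i$ ($i\ne k$), $x'_k=x_k^{-1}(\prod_jx_j^{[-\varepsilon b_{jk}]_+})^{d_k}\frac{\sum_{s=0}^{d_k}z_{k,s}\hat y_k^{\varepsilon s}}{\bigoplus_{s=0}^{d_k}z_{k,s}y_k^{\varepsilon s}}$, $\hat y_i=y_i\prod_jx_j^{b_{ji}}$,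 $\varepsilon=\pm1$. $\mathbb T_n$ is the $n$-regular tree with edges labeled $1,\dots,n$, distinct labels at each vertex; a $(\mathbf d,\mathbf z)$-cluster pattern assigns seeds $(\mathbf x_t,\mathbf y_t,B_t)$, $\mathbf y_t=(y^t_i)$, to vertices related by $\mu_k$ along edges labeled $k$, initial seed at a fixed $t_0$. Principal coefficients: for formal variables $y_1,\dots,y_n$, $z_{i,s}$ ($z_{i,s}=z_{i,d_i-s}$), $\mathrm{Trop}(\mathbf y,\mathbf z)$ is the free abelian group they generate with $\oplus$ the componentwise minimum of exponents; the pattern with principal coefficients lives in $\mathrm{Trop}(\mathbf y,\mathbf z)$ with initial seed $(\mathbf x,\mathbf y,B)$ ($\mathbf y$ the generators). Its $y^t_j$ are Laurent monomials $\prod_iy_i^{c^t_{ij}}$ in $\mathbf y$ alone, defining $C^t=(c^t_{ij})$. Its $x^t_i$ are $X$-functions $X^t_i\in\mathbb Z[x_1^{\pm1},\dots,x_n^{\pm1},\mathbf y,\mathbf z]$, and $F^t_i(\mathbf y,\mathbf z)=X^t_i(1,\dots,1,\mathbf y,\mathbf z)$. Each $F^t_i$ is a subtraction-free rational expression in $\mathbf y,\mathbf z$, so it can be evaluated in any semifield: $F^t_i|_{\mathbb P}(\mathbf y,\mathbf z)$ denotes the value in $\mathbb P$ with $+$ replaced by $\oplus$ and the variables replaced by the given elements of $\mathbb P$. $Y^t_i(\mathbf y,\mathbf z)$ (the $Y$-functions) are the $y$-variables of the $(\mathbf d,\mathbf z)$-cluster pattern with initial seed $(\mathbf x,\mathbf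 y,B)$ in the universal semifield $\mathbb Q_{\mathrm{sf}}(\mathbf y,\mathbf z)$ of subtraction-free rational functions in the formal variables. *)

From HB Require Import structures.
From mathcomp Require Import all_boot all_order all_algebra.
Set Implicit Arguments. Unset Strict Implicit. Unset Printing Implicit Defensive.
Import Order.TTheory GRing.Theory Num.Theory.
Local Open Scope ring_scope.

Record sfops := SFOps {
  sf_car :> Type;
  sf_mul : sf_car -> sf_car -> sf_car;
  sf_one : sf_car;
  sf_inv : sf_car -> sf_car;
  sf_add : sf_car -> sf_car -> sf_car }.

Record semifield := Semifield {
  sf_ops :> sfops;
  sf_mulA : forall a b c : sf_ops, sf_mul a (sf_mul b c) = sf_mul (sf_mul a b) c;
  sf_mulC : forall a b : sf_ops, sf_mul a b = sf_mul b a;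
  sf_mul1 : forall a : sf_ops, sf_mul (sf_one sf_ops) a = a;
  sf_mulV : forall a : sf_ops, sf_mul (sf_inv a) a = sf_one sf_ops;
  sf_addA : forall a b c : sf_ops, sf_add a (sf_add b c) = sf_add (sf_add a b) c;
  sf_addC : forall a b : sf_ops, sf_add a b = sf_add b a;
  sf_mulDl : forall a b c : sf_ops,
      sf_mul (sf_add a b) c = sf_add (sf_mul a c) (sf_mul b c) }.

Fixpoint sf_pown (O : sfops) (x : O) (m : nat) : O :=
  match m with 0%N => sf_one O | m'.+1 => sf_mul x (sf_pown x m') end.

Definition sf_powz (O : sfops) (x : O) (k : int) : O :=
  match k with Posz m => sf_pown x m | Negz m => sf_inv (sf_pown x m.+1) end.

Definition sf_prod (O : sfops) (n : nat) (f : 'I_n -> O) : O :=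
  foldr (fun i acc => sf_mul (f i) acc) (sf_one O) (enum 'I_n).

(* sf_bigadd f m = f 0 (+) f 1 (+) ... (+) f m  (nonempty, no neutral element) *)
Definition sf_bigadd (O : sfops) (f : nat -> O) (m : nat) : O :=
  foldl (fun acc s => sf_add acc (f s)) (f 0%N) (iota 1 m).

Definition bplus (a : int) : int := if 0 <= a then a else 0.

Definition skew_symmetrizable (n : nat) (B : 'M[int]_n) : Prop :=
  exists D : 'I_n -> nat, (forall i, (0 < D i)%N) /\
    forall i j, (D i)%:Z * B i j = - ((D j)%:Z * B j i).

Definition mutB (n : nat) (d : 'I_n -> nat) (k : 'I_n) (B : 'M[int]_n) : 'M[int]_n :=
  \matrix_(i, j) if (i == k) || (j == k) then - B i j
     else B i j + (d k)%:Z * (bplus (- B i k) * B k j + B i k * bplus (B k j)).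

(* y-mutation with epsilon = +1 (the result is independent of epsilon) *)
Definition mutY (O : sfops) (n : nat) (d : 'I_n -> nat) (z : 'I_n -> nat -> O)
    (k : 'I_n) (B : 'M[int]_n) (y : 'I_n -> O) : 'I_n -> O :=
  fun i => if i == k then sf_inv (y k) else
    sf_mul (sf_mul (y i) (sf_pown (sf_powz (y k) (bplus (B k i))) (d k)))
           (sf_powz (sf_bigadd (fun s => sf_mul (z k s) (sf_pown (y k) s)) (d k))
                    (- B k i)).

(* Vertices of T_n: reduced words in the edge labels, read from t0.
   (y,B)-part of the (d,z)-cluster pattern at the vertex reached by w. *)
Definition reduced_word (n : nat) (w : seq 'I_n) : bool :=
  sorted (fun a b : 'I_n => a != b) w.

Definition ypattern (O : sfops) (n : nat) (d : 'I_n -> nat) (z : 'I_n -> nat -> O)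
    (y : 'I_n -> O) (B : 'M[int]_n) (w : seq 'I_n) : ('I_n -> O) * 'M[int]_n :=
  foldl (fun s k => (mutY d z k s.2 s.1, mutB d k s.2)) (y, B) w.

Definition maxd (n : nat) (d : 'I_n -> nat) : nat := (\max_(i < n) d i)%N.

(* formal variables: y_i, and z_{k,s} with 1 <= s <= d_k - 1 identified with
   z_{k,d_k - s}; the key of z_{k,s} is (k, min(s, d_k - s)). *)
Definition var (n : nat) (d : 'I_n -> nat) : finType :=
  ('I_n + ('I_n * 'I_(maxd d).+1))%type.

Definition trop (n : nat) (d : 'I_n -> nat) := {ffun var d -> int}.

Definition tropOps (n : nat) (d : 'I_n -> nat) : sfops :=
  @SFOps (trop d) (fun a b => [ffun v => a v + b v]) [ffun=> 0]
         (fun a => [ffun v => - a v]) (fun a b => [ffun v => Order.min (a v) (b v)]).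

Definition zkey (n : nat) (d : 'I_n -> nat) (k : 'I_n) (s : nat) : var d :=
  inr (k, inord (minn s (d k - s))).

Definition trop_y (n : nat) (d : 'I_n -> nat) (i : 'I_n) : tropOps d :=
  [ffun v => if v == inl i then 1 else 0].

Definition trop_z (n : nat) (d : 'I_n -> nat) (k : 'I_n) (s : nat) : tropOps d :=
  if (0 < s < d k)%N then [ffun v => if v == zkey d k s then 1 else 0]
  else [ffun=> 0].

Definition trop_mono (O : sfops) (n : nat) (d : 'I_n -> nat) (val : var d -> O)
    (c : trop d) : O :=
  foldr (fun v acc => sf_mul (sf_powz (val v) (c v)) acc) (sf_one O) (enum (var d)).

Inductive sfexpr (A : Type) :=
| SAtom of A | SOne | SMul of sfexpr A & sfexpr A | SInv of sfexpr A
| SAdd of sfexpr A & sfexpr A.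

Definition exprOps (A : Type) : sfops :=
  @SFOps (sfexpr A) (@SMul A) (@SOne A) (@SInv A) (@SAdd A).

Fixpoint sf_eval (A : Type) (O : sfops) (v : A -> O) (e : sfexpr A) : O :=
  match e with
  | SAtom a => v a
  | SOne => sf_one O
  | SMul e1 e2 => sf_mul (sf_eval v e1) (sf_eval v e2)
  | SInv e1 => sf_inv (sf_eval v e1)
  | SAdd e1 e2 => sf_add (sf_eval v e1) (sf_eval v e2)
  end.

(* equality in the universal semifield Q_sf: equality as rational functions,
   tested at all points with positive rational coordinates *)
Definition ratOps : sfops := @SFOps rat *%R 1 GRing.inv +%R.
Definition sf_equiv (A : Type) (e1 e2 : sfexpr A) : Prop :=
  forall v : A -> rat, (forall a, 0 < v a) ->
    sf_eval (O := ratOps) v e1 = sf_eval (O := ratOps) v e2.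

(* atoms of X-expressions: cluster variables x_i and coefficients in Trop *)
Definition patom (n : nat) (d : 'I_n -> nat) := ('I_n + trop d)%type.

Definition pr_mutX (n : nat) (d : 'I_n -> nat) (k : 'I_n) (B : 'M[int]_n)
    (Y : 'I_n -> trop d) (X : 'I_n -> sfexpr (patom d)) : 'I_n -> sfexpr (patom d) :=
  let E := exprOps (patom d) in
  let C (c : trop d) : E := SAtom (inr c) in
  let yhat : E := sf_mul (C (Y k)) (sf_prod (fun j => sf_powz (O := E) (X j) (B j k))) in
  fun i => if i == k then
    sf_mul (sf_mul (sf_mul (sf_inv (s := E) (X k))
        (sf_pown (sf_prod (fun j => sf_powz (O := E) (X j) (bplus (- B j k)))) (d k)))
        (sf_bigadd (fun s => sf_mul (C (trop_z d k s)) (sf_pown yhat s)) (d k)))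
      (sf_inv (C (sf_bigadd (O := tropOps d)
                   (fun s => sf_mul (trop_z d k s) (sf_pown (Y k : tropOps d) s)) (d k))))
  else X i.

Definition prseed (n : nat) (d : 'I_n -> nat) :=
  (('I_n -> sfexpr (patom d)) * ('I_n -> trop d) * 'M[int]_n)%type.

Definition prpattern (n : nat) (d : 'I_n -> nat) (B : 'M[int]_n) (w : seq 'I_n)
    : prseed d :=
  foldl (fun (s : prseed d) k =>
           let: (X, Y, Bt) := s in
           (pr_mutX k Bt Y X,
            mutY (O := tropOps d) d (trop_z d) k Bt Y,
            mutB d k Bt))
        ((fun i => SAtom (inl i)), (fun i => trop_y d i), B) w.

(* C-matrix: c^t_{ij} = exponent of y_i in y^t_j *)
Definition Cmat (n : nat) (d : 'I_n -> nat) (B : 'M[int]_n) (w : seq 'I_n)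
    (i j : 'I_n) : int :=
  (prpattern d B w).1.2 j (inl i).

(* F-polynomial F^t_j = X^t_j(1,...,1,y,z), as a subtraction-free expression
   whose atoms are Laurent monomials in y,z *)
Definition Fpoly (n : nat) (d : 'I_n -> nat) (B : 'M[int]_n) (w : seq 'I_n)
    (j : 'I_n) : sfexpr (trop d) :=
  sf_eval (O := exprOps (trop d))
    (fun a : patom d => match a with inl _ => SOne _ | inr c => SAtom c end)
    ((prpattern d B w).1.1 j).

Definition Feval (P : sfops) (n : nat) (d : 'I_n -> nat) (val : var d -> P)
    (F : sfexpr (trop d)) : P :=
  sf_eval (trop_mono val) F.

Definition Pval (P : sfops) (n : nat) (d : 'I_n -> nat) (y : 'I_n -> P)
    (z : 'I_n -> nat -> P) (v : var d) : P :=
  match v with inl i => y i | inr (k, s) => z k (val s) end.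

Definition ugen_z (n : nat) (d : 'I_n -> nat) (k : 'I_n) (s : nat) : exprOps (var d) :=
  if (0 < s < d k)%N then SAtom (zkey d k s) else SOne _.

(* Written additively in the multiplicative group of the semifield, the formula is
   linear in its exponents, and one inducts on the distance from the initial
   vertex.  Under a mutation in direction k both sides change in the same way:
   the Laurent monomial in y with exponents C picks up the tropical value T of the
   exchange polynomial (+)_s z_{k,s} y_k^s in Trop(y,z), the new F_k acquires the
   factor S/T, where S is the exchange polynomial evaluated in P at the
   specialisation x = 1 of y-hat_k, and the two occurrences of T cancel.  By the
   induction hypothesis y-hat_k specialises to y_k, so S is exactly the
   normalising factor of the y-mutation in P.  The identity for Y-functions is
   the same formula in the semifield of positive rationals, transported through
   evaluation, which commutes with mutation. *)

From HB Require Import structures.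
From mathcomp Require Import all_boot all_order all_algebra ssrAC boolp ring.
Import Order.TTheory GRing.Theory Num.Theory.
Local Open Scope ring_scope.
Set Implicit Arguments. Unset Strict Implicit. Unset Printing Implicit Defensive.

(** * Semifields as abelian groups *)

(* Products become [+], powers [*+] and [*~], and [sf_prod] becomes [\sum];
   equality and choice on the arbitrary carrier are classical. *)
Definition sf_grp (P : semifield) : Type := sf_car P.
HB.instance Definition _ (P : semifield) := gen_eqMixin (sf_grp P).
HB.instance Definition _ (P : semifield) := gen_choiceMixin (sf_grp P).
HB.instance Definition _ (P : semifield) :=
  GRing.isZmodule.Build (sf_grp P) (@sf_mulA P) (@sf_mulC P) (@sf_mul1 P) (@sf_mulV P).

Section AdditiveNotation.
Variable P : semifield.

Lemma sf_mulE (a b : P) : sf_mul a b = (a : sf_grp P) + b.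
Proof. by []. Qed.

Lemma sf_invE (a : P) : sf_inv a = - (a : sf_grp P).
Proof. by []. Qed.

Lemma sf_pownE (a : P) m : sf_pown a m = (a : sf_grp P) *+ m.
Proof. by elim: m => //= m ->; rewrite mulrS. Qed.

Lemma sf_powzE (a : P) k : sf_powz a k = (a : sf_grp P) *~ k.
Proof. by case: k => m; rewrite /sf_powz ?sf_invE sf_pownE // NegzE mulrNz. Qed.

Lemma sf_foldrE (T : Type) (f : T -> P) (s : seq T) :
  foldr (fun i acc => sf_mul (f i) acc) (sf_one P) s = \sum_(i <- s) (f i : sf_grp P).
Proof. by elim: s => [|x s IH] /=; rewrite ?big_nil ?big_cons ?IH. Qed.

Lemma sf_prodE n (f : 'I_n -> P) : sf_prod f = \sum_j (f j : sf_grp P).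
Proof. by rewrite /sf_prod sf_foldrE big_enum. Qed.

End AdditiveNotation.

Lemma eq_sf_prod (O : sfops) n (f g : 'I_n -> O) : f =1 g -> sf_prod f = sf_prod g.
Proof. by move=> eq_fg; rewrite /sf_prod; elim: (enum _) => //= j r ->; rewrite eq_fg. Qed.

Lemma eq_sf_bigadd (O : sfops) (f g : nat -> O) m :
  (forall s, (s <= m)%N -> f s = g s) -> sf_bigadd f m = sf_bigadd g m.
Proof.
move=> eq_fg; rewrite /sf_bigadd eq_fg //.
have : all (fun s => s <= m)%N (iota 1 m).
  by apply/allP => s; rewrite mem_iota add1n ltnS => /andP[].
by elim: (iota 1 m) (g 0%N) => //= s r IH a /andP[/eq_fg-> /IH->].
Qed.

Definition exch_poly (O : sfops) (m : nat) (z : nat -> O) (u : O) : O :=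
  sf_bigadd (fun s => sf_mul (z s) (sf_pown u s)) m.

Lemma eq_exch_poly (O : sfops) m (z1 z2 : nat -> O) u :
  (forall s, (s <= m)%N -> z1 s = z2 s) -> exch_poly m z1 u = exch_poly m z2 u.
Proof. by move=> eq_z; apply: eq_sf_bigadd => s /eq_z ->. Qed.

(** * Morphisms *)

Definition grp_morph (O1 O2 : sfops) (h : O1 -> O2) :=
  [/\ forall a b, h (sf_mul a b) = sf_mul (h a) (h b),
      h (sf_one O1) = sf_one O2 & forall a, h (sf_inv a) = sf_inv (h a)].

Definition sf_morph (O1 O2 : sfops) (h : O1 -> O2) :=
  grp_morph h /\ forall a b, h (sf_add a b) = sf_add (h a) (h b).

Section Morphisms.
Variables (O1 O2 : sfops) (h : O1 -> O2).

Section GroupMorphism.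
Hypothesis hM : grp_morph h.

Lemma grp_morph_pown a m : h (sf_pown a m) = sf_pown (h a) m.
Proof. by case: hM => hmul h1 _; elim: m => //= m IH; rewrite hmul IH. Qed.

Lemma grp_morph_powz a k : h (sf_powz a k) = sf_powz (h a) k.
Proof. by case: hM => _ _ hinv; case: k => m; rewrite /sf_powz ?hinv grp_morph_pown. Qed.

Lemma grp_morph_foldr (T : Type) (f : T -> O1) s :
  h (foldr (fun i acc => sf_mul (f i) acc) (sf_one O1) s) =
  foldr (fun i acc => sf_mul (h (f i)) acc) (sf_one O2) s.
Proof. by case: hM => hmul h1 _; elim: s => //= x s IH; rewrite hmul IH. Qed.

Lemma grp_morph_prod n (f : 'I_n -> O1) : h (sf_prod f) = sf_prod (fun j => h (f j)).
Proof. exact: grp_morph_foldr. Qed.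

Lemma grp_morph_trop_mono n (d : 'I_n -> nat) (val : var d -> O1) c :
  h (trop_mono val c) = trop_mono (fun v => h (val v)) c.
Proof.
rewrite /trop_mono grp_morph_foldr.
by elim: (enum _) => //= v s ->; rewrite grp_morph_powz.
Qed.

End GroupMorphism.

Section SemifieldMorphism.
Hypothesis hM : sf_morph h.

Lemma sf_morph_bigadd (f : nat -> O1) m :
  h (sf_bigadd f m) = sf_bigadd (fun s => h (f s)) m.
Proof.
case: hM => _ hadd; rewrite /sf_bigadd.
by elim: (iota 1 m) (f 0%N) => //= s r IH a; rewrite IH hadd.
Qed.

Lemma sf_morph_exch m z u : h (exch_poly m z u) = exch_poly m (fun s => h (z s)) (h u).
Proof.
rewrite /exch_poly sf_morph_bigadd; apply: eq_sf_bigadd => s _.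
by have [[hmul _ _] _] := hM; rewrite hmul (grp_morph_pown hM.1).
Qed.

Lemma sf_morph_eval (A : Type) (g : A -> O1) e :
  h (sf_eval g e) = sf_eval (fun a => h (g a)) e.
Proof.
have [[hmul h1 hinv] hadd] := hM.
by elim: e => //= [e1 IH1 e2 IH2|e IH|e1 IH1 e2 IH2]; rewrite ?hmul ?hinv ?hadd ?IH ?IH1 ?IH2.
Qed.

End SemifieldMorphism.
End Morphisms.

Lemma sf_eval_morph (A : Type) (O : sfops) (g : A -> O) :
  sf_morph (O1 := exprOps A) (sf_eval g).
Proof. by []. Qed.

Lemma eq_sf_eval (A : Type) (O : sfops) (g1 g2 : A -> O) :
  g1 =1 g2 -> sf_eval g1 =1 sf_eval g2.
Proof. by move=> eq_g; elim=> //= *; congruence. Qed.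

Section YPatternMorphism.
Variables (O1 O2 : sfops) (h : O1 -> O2) (n : nat) (d : 'I_n -> nat).
Hypothesis hM : sf_morph h.

Lemma sf_morph_mutY z k B y i :
  h (mutY d z k B y i) = mutY d (fun k s => h (z k s)) k B (fun j => h (y j)) i.
Proof.
have [[hmul _ hinv] _] := hM; rewrite /mutY; case: eqP => // _.
by rewrite !hmul !(grp_morph_pown hM.1) !(grp_morph_powz hM.1) (sf_morph_exch hM).
Qed.

Lemma sf_morph_ypattern z y y' B w :
  y' =1 (fun j => h (y j)) ->
  (ypattern d (fun k s => h (z k s)) y' B w).1 =1 (fun i => h ((ypattern d z y B w).1 i)).
Proof.
elim: w y y' B => [|k w IH] y y' B eq_y //=.
by apply: IH => i; rewrite sf_morph_mutY /mutY /= !eq_y.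
Qed.

End YPatternMorphism.

Lemma id_grp_morph (P : semifield) : grp_morph (@id P).
Proof. by []. Qed.

Lemma grp_morph_mutY (O : sfops) (P : semifield) (h : O -> P) (hM : grp_morph h)
    n (d : 'I_n -> nat) z k B y i :
  (h (mutY d z k B y i) : sf_grp P) =
  if i == k then - (h (y k) : sf_grp P)
  else (h (y i) : sf_grp P) + ((h (y k) : sf_grp P) *~ bplus (B k i)) *+ d k
       - (h (exch_poly (d k) (z k) (y k)) : sf_grp P) *~ B k i.
Proof.
have [hmul _ hinv] := hM; rewrite /mutY; case: eqP => _; first exact: hinv.
by rewrite !hmul !sf_mulE (grp_morph_pown hM) !(grp_morph_powz hM) sf_pownE !sf_powzE mulrNz.
Qed.

Section TropicalMonomials.
Variables (n : nat) (d : 'I_n -> nat) (P : semifield) (val : var d -> P).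

Lemma trop_monoE (c : trop d) : trop_mono val c = \sum_v (val v : sf_grp P) *~ c v.
Proof.
rewrite /trop_mono (sf_foldrE (fun v => sf_powz (val v) (c v))) big_enum.
by apply: eq_bigr => v _; rewrite sf_powzE.
Qed.

Lemma trop_mono_morph : grp_morph (O1 := tropOps d) (trop_mono val).
Proof.
split=> [a b|| a]; rewrite /= ?sf_mulE ?sf_invE !trop_monoE.
- by rewrite -big_split; apply: eq_bigr => v _; rewrite ffunE mulrzDr.
- by rewrite big1 // => v _; rewrite ffunE.
- by rewrite -sumrN; apply: eq_bigr => v _; rewrite ffunE mulrNz.
Qed.

Lemma trop_mono_delta u : trop_mono val [ffun v => if v == u then 1 else 0] = val u.
Proof.
rewrite trop_monoE (bigD1 u) //= big1 ?addr0 ?ffunE ?eqxx // => v /negbTE.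
by rewrite ffunE => ->.
Qed.

Lemma trop_mono_trop_z k s :
  trop_mono val (trop_z d k s) = if (0 < s < d k)%N then val (zkey d k s) else sf_one P.
Proof.
rewrite /trop_z; case: ifP => _; first exact: trop_mono_delta.
by have [_ trop_mono1 _] := trop_mono_morph; apply: trop_mono1.
Qed.

End TropicalMonomials.

Section ExchangeMatrices.
Variables (n : nat) (d : 'I_n -> nat).

Definition Bpattern (B : 'M[int]_n) (w : seq 'I_n) : 'M[int]_n :=
  foldl (fun B k => mutB d k B) B w.

Lemma ypattern_B (O : sfops) z (y : 'I_n -> O) B w :
  (ypattern d z y B w).2 = Bpattern B w.
Proof. by elim: w y B => //= k w IH y B; rewrite -(IH (mutY d z k B y)). Qed.

Lemma bplus_pmull (c x : int) : 0 < c -> bplus (c * x) = c * bplus x.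
Proof. by move=> c_gt0; rewrite /bplus pmulr_rge0 //; case: ifP; rewrite ?mulr0. Qed.

Lemma skew_symmetrizable_mutB B k :
  skew_symmetrizable B -> skew_symmetrizable (mutB d k B).
Proof.
move=> [D [D_gt0 DB]]; exists D; split=> // i j; rewrite !mxE.
have DBk l : (D l)%:Z * bplus (- B l k) = (D k)%:Z * bplus (B k l).
  by rewrite -bplus_pmull ?ltz_nat // mulrN DB opprK bplus_pmull ?ltz_nat.
rewrite [(j == k) || _]orbC; case: ((i == k) || (j == k)); first by rewrite !mulrN DB.
set dk := (d k)%:Z.
have distr l m : (D l)%:Z * (B l m + dk * (bplus (- B l k) * B k m + B l k * bplus (B k m)))
  = (D l)%:Z * B l m + dk * (((D l)%:Z * bplus (- B l k)) * B k m
      + ((D l)%:Z * B l k) * bplus (B k m)) by ring.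
by rewrite !distr !DBk (DB i k) (DB j k) (DB i j); ring.
Qed.

Lemma skew_symmetrizable_diag (B : 'M[int]_n) i : skew_symmetrizable B -> B i i = 0.
Proof.
move=> [D [D_gt0 DB]]; have Di_neq0 : (D i)%:Z != 0 by rewrite lt0r_neq0 // ltz_nat.
move/eqP: (DB i i); rewrite -addr_eq0 -mulrDr mulf_eq0 (negbTE Di_neq0) -mulr2n.
by rewrite mulrn_eq0 /= => /eqP.
Qed.

Lemma skew_symmetrizable_Bpattern B w :
  skew_symmetrizable B -> skew_symmetrizable (Bpattern B w).
Proof. by elim: w B => //= k w IH B /(skew_symmetrizable_mutB k); apply: IH. Qed.

End ExchangeMatrices.

(** * Principal coefficients *)

Section PrincipalCoefficients.
Variables (n : nat) (d : 'I_n -> nat).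

Definition prstep (s : prseed d) (k : 'I_n) : prseed d :=
  let: (X, Y, Bt) := s in
  (pr_mutX k Bt Y X, mutY (O := tropOps d) d (trop_z d) k Bt Y, mutB d k Bt).

Lemma prpattern_rcons B w k : prpattern d B (rcons w k) = prstep (prpattern d B w) k.
Proof. by rewrite /prpattern foldl_rcons. Qed.

Lemma prpattern_B B w : (prpattern d B w).2 = Bpattern d B w.
Proof.
elim/last_ind: w => //= w k IH.
by rewrite prpattern_rcons /Bpattern foldl_rcons -/(Bpattern d B w) -IH; case: prpattern => [[]].
Qed.

Definition at_x1 (P : semifield) (val : var d -> P) (a : patom d) : P :=
  match a with inl _ => sf_one P | inr c => trop_mono val c end.

Lemma Feval_Fpoly (P : semifield) (val : var d -> P) B w j :
  Feval val (Fpoly d B w j) = sf_eval (at_x1 val) ((prpattern d B w).1.1 j).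
Proof. by rewrite /Feval /Fpoly (sf_morph_eval (sf_eval_morph _)); apply: eq_sf_eval => -[]. Qed.

Definition eval_x1 (P : semifield) (val : var d -> P) (e : sfexpr (patom d)) : sf_grp P :=
  sf_eval (at_x1 val) e.

Lemma eval_x1_pr_mutX (P : semifield) (val : var d -> P) k Bt (Y : 'I_n -> trop d) X j :
  eval_x1 val (pr_mutX k Bt Y X j) =
  if j == k then
    - eval_x1 val (X k) + (\sum_l eval_x1 val (X l) *~ bplus (- Bt l k)) *+ d k
    + exch_poly (d k) (fun s => trop_mono val (trop_z d k s))
        ((trop_mono val (Y k) : sf_grp P) + \sum_l eval_x1 val (X l) *~ Bt l k)
    - (trop_mono val (exch_poly (O := tropOps d) (d k) (trop_z d k) (Y k)) : sf_grp P)
  else eval_x1 val (X j).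
Proof.
have hM := sf_eval_morph (at_x1 val); rewrite /pr_mutX; case: eqP => // _.
rewrite /eval_x1 /= (grp_morph_pown hM.1) !(grp_morph_prod hM.1) (sf_morph_exch hM) /=.
rewrite (grp_morph_prod hM.1) !sf_prodE sf_pownE !sf_mulE !sf_invE.
have powzE l m : sf_eval (at_x1 val) (sf_powz (O := exprOps _) (X l) m) = eval_x1 val (X l) *~ m.
  by rewrite (grp_morph_powz hM.1) sf_powzE.
by rewrite (eq_bigr _ (fun l _ => powzE l (bplus (- Bt l k))))
           (eq_bigr _ (fun l _ => powzE l (Bt l k))).
Qed.

End PrincipalCoefficients.

Section MutatedSums.
Variables (V : zmodType) (n : nat) (d : 'I_n -> nat) (B : 'M[int]_n) (k : 'I_n).
Variables (F : 'I_n -> V) (G : V).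
Hypothesis Bkk : B k k = 0.

Lemma sum_mutB_col :
  \sum_j (if j == k then G else F j) *~ mutB d k B j k = - \sum_j F j *~ B j k.
Proof.
rewrite -sumrN; apply: eq_bigr => j _; rewrite mxE eqxx orbT mulrNz.
by case: eqP => [->|//]; rewrite Bkk !mulr0z.
Qed.

Lemma sum_mutB i : i != k ->
  \sum_j (if j == k then G else F j) *~ mutB d k B j i =
  \sum_j F j *~ B j i + ((\sum_j F j *~ B j k) *~ bplus (B k i)) *+ d k
  - (G + F k - (\sum_j F j *~ bplus (- B j k)) *+ d k) *~ B k i.
Proof.
move=> ik; set b := B k i; set p := bplus b.
have mutB_ji j : j != k -> mutB d k B j i = B j i + (d k)%:Z * (bplus (- B j k) * b + B j k * p).
  by move=> jk; rewrite mxE (negbTE jk) (negbTE ik).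
pose c j := B j i + B j k * p * (d k)%:Z + bplus (- B j k) * (d k)%:Z * b.
have sum_c : \sum_j F j *~ c j =
    \sum_j F j *~ B j i + ((\sum_j F j *~ B j k) *~ p) *+ d k
    + ((\sum_j F j *~ bplus (- B j k)) *+ d k) *~ b.
  rewrite !pmulrn -!mulrzA !mulrz_suml -!big_split /=.
  by apply: eq_bigr => j _; rewrite -!mulrzA -!mulrzDr /c !mulrA.
have c_k : c k = b by rewrite /c Bkk oppr0 /bplus lexx !mul0r !addr0.
rewrite mulrzBl opprB addrA -sum_c (bigD1 k) //= [in RHS](bigD1 k) //= eqxx c_k.
rewrite mxE eqxx /= mulrNz [F k *~ b + _]addrC mulrzDl [G *~ b + _]addrC opprD addrA addrK.
rewrite addrC; congr (_ + _); apply: eq_bigr => j jk.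
by rewrite mutB_ji // /c (negbTE jk); congr (_ *~ _); ring.
Qed.

End MutatedSums.

(** * The separation formula *)

Section Separation.
Variables (n : nat) (d : 'I_n -> nat) (P : semifield) (val : var d -> P).

Definition separated_by (y : 'I_n -> P) (s : prseed d) : Prop :=
  forall i, (y i : sf_grp P) =
    (trop_mono val (s.1.2 i) : sf_grp P) + \sum_j eval_x1 val (s.1.1 j) *~ s.2 j i.

Lemma separated_by_mutation (z : 'I_n -> nat -> P) (y : 'I_n -> P) (s : prseed d) k :
  skew_symmetrizable s.2 ->
  (forall s, (s <= d k)%N -> trop_mono val (trop_z d k s) = z k s) ->
  separated_by y s -> separated_by (mutY d z k s.2 y) (prstep s k).
Proof.
case: s => [[X Y] Bt] /= skewB z_val; rewrite /separated_by /= => sep i.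
have Bkk := skew_symmetrizable_diag k skewB.
rewrite (grp_morph_mutY (id_grp_morph P)) (grp_morph_mutY (trop_mono_morph val)).
under eq_bigr do rewrite eval_x1_pr_mutX.
case: eqP => [->|/eqP ik]; first by rewrite sum_mutB_col // sep opprD.
rewrite sum_mutB // -(sep k) (eq_exch_poly _ z_val).
set S := exch_poly _ _ _; set T := trop_mono _ (exch_poly (O := tropOps d) _ _ _).
set F := eval_x1 val (X k); set Q := (\sum_l eval_x1 val (X l) *~ bplus (- Bt l k)) *+ d k.
(* The tropical normalisation T of the new F_k cancels the one in the new C-part. *)
have -> : - F + Q + S - (T : sf_grp P) + F - Q = (S : sf_grp P) - (T : sf_grp P).
  by rewrite (AC 6 ((3*4)*(2*6)*(1*5))) /= subrr addNr !addr0.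
rewrite (sep i) (sep k) mulrzDl mulrnDl mulrzBl opprB -!addrA; congr (_ + _).
rewrite addrCA; congr (_ + _); rewrite [RHS]addrCA; congr (_ + _).
by rewrite [RHS]addrCA addKr.
Qed.

Lemma separated_by_ypattern z B w :
  skew_symmetrizable B ->
  (forall k s, (s <= d k)%N -> trop_mono val (trop_z d k s) = z k s) ->
  separated_by (ypattern d z (fun j => val (inl j)) B w).1 (prpattern d B w).
Proof.
move=> skewB z_val; elim/last_ind: w => [i|w k IH] /=.
  by rewrite trop_mono_delta big1 ?addr0 // => j _; rewrite /eval_x1 /= mul0rz.
rewrite prpattern_rcons /ypattern foldl_rcons -/(ypattern _ _ _ _ w) ypattern_B -prpattern_B.
apply: separated_by_mutation (z_val k) IH.
by rewrite prpattern_B; apply: skew_symmetrizable_Bpattern.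
Qed.

End Separation.

Section CMatrix.
Variables (n : nat) (d : 'I_n -> nat).
Implicit Types (a b : tropOps d) (v : var d).

Lemma trop_mulE a b v : (sf_mul a b : trop d) v = a v + b v.
Proof. by rewrite ffunE. Qed.

Lemma trop_invE a v : (sf_inv a : trop d) v = - a v.
Proof. by rewrite ffunE. Qed.

Lemma trop_pownE a m v : (sf_pown a m : trop d) v = a v *+ m.
Proof. by elim: m => [|m IH] /=; rewrite ffunE // IH mulrS. Qed.

Lemma trop_powzE a k v : (sf_powz a k : trop d) v = a v *~ k.
Proof. by case: k => m; rewrite /sf_powz ?trop_invE trop_pownE // NegzE mulrNz. Qed.

Lemma trop_z_ge0 k s v : 0 <= (trop_z d k s : trop d) v.
Proof. by rewrite /trop_z; case: ifP => _; rewrite ffunE //; case: eqP. Qed.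

Lemma exch_poly_trop_z k (u : tropOps d) v :
  u v = 0 -> (exch_poly (d k) (trop_z d k) u : trop d) v = 0.
Proof.
move=> u_v; rewrite /exch_poly /sf_bigadd.
have term_v s : (sf_mul (trop_z d k s) (sf_pown u s) : trop d) v = (trop_z d k s : trop d) v.
  by rewrite trop_mulE trop_pownE u_v mul0rn addr0.
have : (sf_mul (trop_z d k 0) (sf_pown u 0) : trop d) v = 0 by rewrite term_v /trop_z ffunE.
elim: (iota 1 (d k)) (sf_mul _ _) => //= s r IH a a_v; apply: IH.
by rewrite ffunE a_v term_v; apply/min_idPl/trop_z_ge0.
Qed.

Lemma prpattern_Y_z B w i p : (prpattern d B w).1.2 i (inr p) = 0.
Proof.
elim/last_ind: w i => [|w k IH] i; first by rewrite ffunE.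
rewrite prpattern_rcons; move: IH; case: prpattern => [[X Y] Bt] /= IH.
rewrite /mutY; case: eqP => _; first by rewrite trop_invE IH oppr0.
rewrite !trop_mulE trop_pownE !trop_powzE !IH mul0rz mul0rn add0r.
by rewrite exch_poly_trop_z ?mul0rz.
Qed.

Lemma trop_mono_Y (P : semifield) (val : var d -> P) B w i :
  trop_mono val ((prpattern d B w).1.2 i) =
  sf_prod (fun j => sf_powz (val (inl j)) (Cmat d B w j i)).
Proof.
rewrite trop_monoE sf_prodE big_sumType /= [X in _ + X]big1 ?addr0 => [|p _].
  by apply: eq_bigr => j _; rewrite sf_powzE.
by rewrite prpattern_Y_z mulr0z.
Qed.

End CMatrix.

Theorem separation_formula (P : semifield) n (d : 'I_n -> nat) (B : 'M[int]_n)
    (val : var d -> P) (z : 'I_n -> nat -> P) :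
  skew_symmetrizable B ->
  (forall k s, (s <= d k)%N -> trop_mono val (trop_z d k s) = z k s) ->
  forall w i, (ypattern d z (fun j => val (inl j)) B w).1 i =
    sf_mul (sf_prod (fun j => sf_powz (val (inl j)) (Cmat d B w j i)))
      (sf_prod (fun j => sf_powz (Feval val (Fpoly d B w j))
                                 ((ypattern d z (fun j => val (inl j)) B w).2 j i))).
Proof.
move=> skewB z_val w i; rewrite (@separated_by_ypattern _ _ _ val z B w skewB z_val i) -trop_mono_Y.
rewrite sf_mulE sf_prodE ypattern_B -prpattern_B.
by apply: congr2 => //; apply: eq_bigr => j _; rewrite sf_powzE Feval_Fpoly.
Qed.

Lemma Pval_zkey (P : semifield) n (d : 'I_n -> nat) (y : 'I_n -> P) z k s :
  (forall s, (s <= d k)%N -> z k s = z k (d k - s)%N) -> (0 < s < d k)%N ->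
  Pval y z (zkey d k s) = z k s.
Proof.
move=> z_sym /andP[_ lt_s_dk]; rewrite /= inordK; last first.
  by rewrite ltnS (leq_trans (geq_minl _ _)) // (leq_trans (ltnW lt_s_dk)) // leq_bigmax.
by rewrite /minn; case: ifP => // _; rewrite -z_sym // ltnW.
Qed.

Lemma trop_mono_Pval_trop_z (P : semifield) n (d : 'I_n -> nat) (y : 'I_n -> P) z :
  (forall i, z i 0%N = sf_one P /\ z i (d i) = sf_one P /\
             forall s, (s <= d i)%N -> z i s = z i (d i - s)%N) ->
  forall k s, (s <= d k)%N -> trop_mono (Pval y z) (trop_z d k s) = z k s.
Proof.
move=> z_palin k s le_s_dk; have [z0 [zd z_sym]] := z_palin k.
rewrite trop_mono_trop_z; case: ifP => [/(Pval_zkey y z_sym) //| /negbT].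
rewrite negb_and -leqNgt -ltnNge leqn0 ltnS => /orP[/eqP-> | le_dk_s]; first by rewrite z0.
by have -> : s = d k by apply/anti_leq; rewrite le_s_dk le_dk_s.
Qed.

Section FormalVariables.
Variables (n : nat) (d : 'I_n -> nat) (P : semifield) (h : exprOps (var d) -> P).
Hypothesis hM : sf_morph h.

Lemma sf_morph_Feval (val : var d -> exprOps (var d)) F :
  h (Feval val F) = Feval (fun v => h (val v)) F.
Proof.
by rewrite /Feval (sf_morph_eval hM); apply: eq_sf_eval => c; rewrite (grp_morph_trop_mono hM.1).
Qed.

Lemma trop_mono_ugen_z k s :
  trop_mono (fun v => h (SAtom v)) (trop_z d k s) = h (ugen_z d k s).
Proof.
by have [[_ h1 _] _] := hM; rewrite trop_mono_trop_z /ugen_z; case: ifP.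
Qed.

Lemma sf_morph_separation_formula B :
  skew_symmetrizable B -> forall w i,
  h ((ypattern (O := exprOps (var d)) d (ugen_z d) (fun j => SAtom (inl j)) B w).1 i) =
  h (sf_mul (s := exprOps (var d))
       (sf_prod (fun j => sf_powz (O := exprOps (var d)) (SAtom (inl j)) (Cmat d B w j i)))
       (sf_prod (fun j => sf_powz (O := exprOps (var d))
                   (Feval (P := exprOps (var d)) (fun v => SAtom v) (Fpoly d B w j))
                   ((ypattern (O := exprOps (var d)) d (ugen_z d)
                       (fun j => SAtom (inl j)) B w).2 j i)))).
Proof.
move=> skewB w i; rewrite -(sf_morph_ypattern d hM _ (y' := fun j => h (SAtom (inl j)))) //.
rewrite (separation_formula skewB (fun k s _ => trop_mono_ugen_z k s)) !ypattern_B.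
have [[h_mul _ _] _] := hM; rewrite h_mul !(grp_morph_prod hM.1).
by f_equal; apply: eq_sf_prod => j; rewrite (grp_morph_powz hM.1) ?sf_morph_Feval.
Qed.

End FormalVariables.

Definition posrat := {q : rat | 0 < q}.

Definition posrat_ops : sfops :=
  @SFOps posrat (fun a b => exist _ (sval a * sval b) (mulr_gt0 (valP a) (valP b)))
    (exist _ 1 ltr01) (fun a => exist _ (sval a)^-1 (etrans (invr_gt0 (sval a)) (valP a)))
    (fun a b => exist _ (sval a + sval b) (addr_gt0 (valP a) (valP b))).

Definition posrat_semifield : semifield.
Proof.
apply: (@Semifield posrat_ops) => [a b c|a b|a|a|a b c|a b|a b c]; apply: val_inj => /=.
- exact: mulrA.
- exact: mulrC.
- exact: mul1r.
- exact/mulVf/lt0r_neq0/valP.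
- exact: addrA.
- exact: addrC.
- exact: mulrDl.
Defined.

Lemma sval_sf_morph : sf_morph (O1 := posrat_semifield) (O2 := ratOps) sval.
Proof. by []. Qed.

Theorem mainTheorem17 (n : nat) (d : 'I_n -> nat) (B : 'M[int]_n) :
  skew_symmetrizable B -> (forall i, (0 < d i)%N) ->
  (forall (P : semifield) (y : 'I_n -> P) (z : 'I_n -> nat -> P),
     (forall i, z i 0%N = sf_one P /\ z i (d i) = sf_one P /\
                forall s, (s <= d i)%N -> z i s = z i (d i - s)%N) ->
     forall (w : seq 'I_n), reduced_word w -> forall i : 'I_n,
       (ypattern d z y B w).1 i =
       sf_mul (sf_prod (fun j => sf_powz (y j) (Cmat d B w j i)))
              (sf_prod (fun j => sf_powz (Feval (Pval y z) (Fpoly d B w j))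
                                         ((ypattern d z y B w).2 j i))))
  /\
  (forall (w : seq 'I_n), reduced_word w -> forall i : 'I_n,
     sf_equiv
       ((ypattern (O := exprOps (var d)) d (ugen_z d) (fun j => SAtom (inl j)) B w).1 i)
       (sf_mul (s := exprOps (var d))
          (sf_prod (fun j => sf_powz (O := exprOps (var d)) (SAtom (inl j)) (Cmat d B w j i)))
          (sf_prod (fun j => sf_powz (O := exprOps (var d))
                      (Feval (P := exprOps (var d)) (fun v => SAtom v) (Fpoly d B w j))
                      ((ypattern (O := exprOps (var d)) d (ugen_z d)
                          (fun j => SAtom (inl j)) B w).2 j i))))).
Proof.
move=> skewB _; split=> [P y z z_palin w _ i|w _ i v v_gt0].
  exact: (separation_formula (val := Pval y z) skewB (trop_mono_Pval_trop_z y z_palin)).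
pose vp (a : var d) : posrat_semifield := exist _ (v a) (v_gt0 a).
have evalE e : sf_eval (O := ratOps) v e = sval (sf_eval vp e).
  by rewrite (sf_morph_eval sval_sf_morph).
by rewrite !evalE (sf_morph_separation_formula (sf_eval_morph vp) skewB).
Qed.
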